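(* Let $n\ge2$, $A\in\mathbb{R}^{n\times n}$ symmetric positive definite with largest and smallest eigenvalues $\lambda_1,\lambda_n$, $\rho=\lambda_1-\lambda_n$, and $f(\mathbf{z})=\frac12\mathbf{z}^TA\mathbf{z}+\frac{\beta}{2}\sum_kz_k^4$ with $\beta>\frac{18n^3}{n-1}\rho$. Then every local minimizer $\mathbf{y}$ of $f$ on $\mathbb{S}^{n-1}$ satisfies $f(\mathbf{y})-\min_{\mathbf{z}\in\mathbb{S}^{n-1}}f(\mathbf{z})\le\frac{1}{18n}\min_{\mathbf{z}\in\mathbb{S}^{n-1}}f(\mathbf{z})$.
   Context: $\mathbb{S}^{n-1}$ is the unit sphere in $\mathbb{R}^n$. *)

From HB Require Import structures.
From mathcomp Require Import all_boot all_order all_algebra.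
From mathcomp Require Import classical_sets reals.
Set Implicit Arguments. Unset Strict Implicit. Unset Printing Implicit Defensive.
Import Order.TTheory GRing.Theory Num.Theory.
Local Open Scope ring_scope.
Local Open Scope classical_set_scope.

Definition qform (R : realType) (n : nat) (A : 'M[R]_n) (z : 'cV[R]_n) : R :=
  (z^T *m A *m z) 0 0.

Definition symmetric_mx (R : realType) (n : nat) (A : 'M[R]_n) : Prop := A^T = A.

Definition posdef_mx (R : realType) (n : nat) (A : 'M[R]_n) : Prop :=
  forall z : 'cV[R]_n, z != 0 -> 0 < qform A z.

Definition sphere (R : realType) (n : nat) : set 'cV[R]_n :=
  [set z | \sum_i (z i 0) ^+ 2 = 1].

Definition fobj (R : realType) (n : nat) (A : 'M[R]_n) (beta : R) (z : 'cV[R]_n) : R :=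
  qform A z / 2 + beta / 2 * \sum_k (z k 0) ^+ 4.

Definition local_min_on (R : realType) (n : nat) (g : 'cV[R]_n -> R)
    (S : set 'cV[R]_n) (y : 'cV[R]_n) : Prop :=
  S y /\ exists eps : R, 0 < eps /\
    forall z, S z -> \sum_i (z i 0 - y i 0) ^+ 2 < eps ^+ 2 -> g y <= g z.

From HB Require Import structures.
From mathcomp Require Import all_boot all_order all_algebra.
From mathcomp Require Import classical_sets reals.
From mathcomp Require Import complex spectral sesquilinear.
From mathcomp Require Import ring lra.
Import Order.TTheory GRing.Theory Num.Theory Num.Def.
Local Open Scope ring_scope.
Local Open Scope classical_set_scope.
Set Implicit Arguments.
Unset Strict Implicit.

(* At a local minimiser [y] of [f] on the sphere, the first- and second-order
   conditions along the great circles through [y] give the Lagrange equation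
   [A y + 2 beta y^3 = mu y] for some [mu] and, tested in the plane of two
   coordinates, the bound [y_k^2 >= 1/(7n)] for every [k].  By the Lagrange
   equation the coordinates of [(A - lamn) y] are [(mu - lamn - 2 beta y_k^2) y_k],
   and its norm is at most [rho]; with the lower bound on the [y_k^2] this
   forces [sum_k y_k^4 <= 1/n + 7 n rho^2 / (4 beta^2)].  As every [z] on the
   sphere has [sum_k z_k^4 >= 1/n], we get
   [f y - min f <= rho/2 + beta/2 (sum_k y_k^4 - 1/n)], which is at most
   [beta / (36 n^2) <= min f / (18 n)] when [beta] is large. *)

Lemma dot_col_mx m (C : pzRingType) (u v : 'cV[C]_m) :
  (u^T *m v) 0 0 = \sum_i u i 0 * v i 0.
Proof. by rewrite mxE; apply: eq_bigr => i _; rewrite mxE. Qed.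

Lemma dot_col_diag_mx m (C : pzRingType) (u v : 'cV[C]_m) (d : 'rV[C]_m) :
  (u^T *m diag_mx d *m v) 0 0 = \sum_i u i 0 * d 0 i * v i 0.
Proof. by rewrite mxE; apply: eq_bigr => i _; rewrite mul_mx_diag !mxE. Qed.

Section RealSymmetricSpectral.
Variable R : rcfType.
Local Notation toC := (real_complex R).

Lemma real_complex_real (x : R) : toC x \is Num.real.
Proof. by apply/complex_realP; exists x. Qed.

Local Open Scope sesquilinear_scope.

(* [c i] is the squared modulus of the [i]-th coordinate of [z] in a unitary
   eigenbasis of [A] over [R[i]], and [a i] the corresponding eigenvalue. *)
Lemma symmetric_spectral_weights n (A : 'M[R]_n) (z : 'cV[R]_n) : A^T = A ->
  exists c a : 'I_n -> R,
  [/\ forall i, 0 <= c i, forall i, eigenvalue A (a i),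
      \sum_k z k 0 ^+ 2 = \sum_i c i,
      (z^T *m A *m z) 0 0 = \sum_i c i * a i &
      \sum_k ((A *m z) k 0) ^+ 2 = \sum_i c i * a i ^+ 2].
Proof.
move=> sA; pose AC := A ^ toC; pose zc := z ^ toC.
have ACT : AC^T = AC by rewrite /AC map_trmx sA.
have ACreal : AC \is a realmx by apply/mxOverP => i j; rewrite mxE real_complex_real.
have zcreal : zc \is a realmx by apply/mxOverP => i j; rewrite mxE real_complex_real.
have ACherm : AC \is hermsymmx.
  apply: realsym_hermsym ACreal.
  by apply/is_hermitianmxP; rewrite expr0 scale1r map_mx_id.
have /orthomx_spectralP eAC := hermitian_normalmx ACherm.
have dreal := hermitian_spectral_diag_real ACherm.
have Punitary := spectral_unitarymx AC.
set P := spectralmx AC in eAC Punitary; set d := spectral_diag AC in eAC dreal.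
have PPt : P *m P^t* = 1%:M := unitarymxP Punitary.
have PtP : P^t* *m P = 1%:M.
  by rewrite -invmx_unitary // mulVmx ?spectral_unit.
rewrite invmx_unitary // in eAC.
pose w := P *m zc.
have zcPt : zc^T *m P^t* = (map_mx conjC w)^T.
  by rewrite /w map_mxM trmx_mul (realmxC zcreal) !map_trmx.
pose c i := complex.Re ((w i 0)^* * w i 0).
pose a i := complex.Re (d 0 i).
have cE i : toC (c i) = (w i 0)^* * w i 0.
  by rewrite RRe_real // ger0_real // mulrC mul_conjC_ge0.
have aE i : toC (a i) = d 0 i by rewrite RRe_real //; apply: (mxOverP dreal).
exists c, a; split.
- by move=> i; rewrite -ler0c cE mulrC mul_conjC_ge0.
- move=> i; rewrite eigenvalue_root_char -(fmorph_root toC) map_char_poly /= aE.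
  rewrite -eigenvalue_root_char; apply/eigenvalueP; exists (row i P).
    by rewrite -row_mul -/AC eAC !mulmxA PPt mul1mx row_mul row_diag_mx -scalemxAl -rowE.
  apply/eqP => /(congr1 (fun M => M *m P^t*)); rewrite mul0mx -row_mul PPt row1.
  by move/rowP/(_ i)/eqP; rewrite !mxE !eqxx oner_eq0.
- apply: (@complexI R); rewrite !rmorph_sum /=.
  transitivity ((zc^T *m P^t* *m (P *m zc)) 0 0).
    rewrite mulmxA -[zc^T *m P^t* *m P]mulmxA PtP mulmx1 dot_col_mx.
    by apply: eq_bigr => i _; rewrite mxE rmorphXn expr2.
  by rewrite zcPt dot_col_mx; apply: eq_bigr => i _; rewrite cE mxE.
- apply: (@complexI R); rewrite !rmorph_sum /=.
  transitivity ((zc^T *m AC *m zc) 0 0).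
    by rewrite /zc /AC map_trmx -!map_mxM [in RHS]mxE.
  rewrite eAC !mulmxA zcPt -mulmxA dot_col_diag_mx.
  by apply: eq_bigr => i _; rewrite rmorphM /= cE aE mxE mulrAC.
- apply: (@complexI R); rewrite !rmorph_sum /=.
  transitivity (((AC *m zc)^T *m (AC *m zc)) 0 0).
    rewrite dot_col_mx; apply: eq_bigr => i _.
    by rewrite rmorphXn expr2 /AC /zc -map_mxM [in RHS]mxE.
  rewrite trmx_mul ACT eAC !mulmxA zcPt -[_ *m P *m P^t*]mulmxA PPt mulmx1.
  rewrite -[_ *m diag_mx d *m diag_mx d]mulmxA mulmx_diag -mulmxA dot_col_diag_mx.
  by apply: eq_bigr => i _; rewrite rmorphM rmorphXn /= cE aE !mxE expr2 mulrAC.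
Qed.

End RealSymmetricSpectral.

Section BinomialSums.
Variables (R : comPzRingType) (n : nat) (x u : 'I_n -> R) (p q : R).

Lemma sum_sqrD_scale :
  \sum_i (p * x i + q * u i) ^+ 2 =
  p ^+ 2 * \sum_i x i ^+ 2 + 2 * p * q * \sum_i x i * u i + q ^+ 2 * \sum_i u i ^+ 2.
Proof. by rewrite !mulr_sumr -!big_split /=; apply: eq_bigr => i _; ring. Qed.

Lemma sum_pow4D_scale :
  \sum_i (p * x i + q * u i) ^+ 4 =
  p ^+ 4 * \sum_i x i ^+ 4 + 4 * p ^+ 3 * q * \sum_i x i ^+ 3 * u i
  + 6 * p ^+ 2 * q ^+ 2 * \sum_i x i ^+ 2 * u i ^+ 2
  + 4 * p * q ^+ 3 * \sum_i x i * u i ^+ 3 + q ^+ 4 * \sum_i u i ^+ 4.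
Proof. by rewrite !mulr_sumr -!big_split /=; apply: eq_bigr => i _; ring. Qed.

End BinomialSums.

Definition bform (R : pzRingType) n (A : 'M[R]_n) (x z : 'cV[R]_n) : R :=
  (x^T *m A *m z) 0 0.

Lemma bformE (R : pzRingType) n (A : 'M[R]_n) (x z : 'cV[R]_n) :
  bform A x z = \sum_i x i 0 * (A *m z) i 0.
Proof. by rewrite /bform -mulmxA dot_col_mx. Qed.

Lemma bformC (R : comPzRingType) n (A : 'M[R]_n) (x z : 'cV[R]_n) :
  A^T = A -> bform A x z = bform A z x.
Proof.
move=> sA; rewrite /bform.
have -> : (x^T *m A *m z) 0 0 = (x^T *m A *m z)^T 0 0 by rewrite [RHS]mxE.
by rewrite !trmx_mul trmxK sA mulmxA.
Qed.

Lemma qform_lin (R : realType) n (A : 'M[R]_n) (x z : 'cV[R]_n) (p q : R) :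
  A^T = A -> qform A (p *: x + q *: z) =
  p ^+ 2 * qform A x + 2 * p * q * bform A x z + q ^+ 2 * qform A z.
Proof.
move=> sA; have := bformC x z sA; rewrite /qform /bform.
rewrite !mulmxDr -!scalemxAr linearD !linearZ /= !mulmxDl -!scalemxAl.
move: (x^T *m A *m x) (x^T *m A *m z) (z^T *m A *m x) (z^T *m A *m z).
by move=> Mxx Mxz Mzx Mzz e; rewrite !mxE e; ring.
Qed.

Section Rayleigh.
Variables (R : rcfType) (n : nat) (A : 'M[R]_n) (lmin lmax : R).
Hypotheses (sA : A^T = A) (eigA : forall a, eigenvalue A a -> lmin <= a <= lmax).

Lemma rayleigh_ge (z : 'cV[R]_n) : lmin * \sum_i z i 0 ^+ 2 <= (z^T *m A *m z) 0 0.
Proof.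
have [c [a [c0 ea -> -> _]]] := symmetric_spectral_weights z sA.
rewrite mulr_sumr; apply: ler_sum => i _; rewrite mulrC ler_wpM2l //.
by case/andP: (eigA (ea i)).
Qed.

Lemma rayleigh_le (z : 'cV[R]_n) : (z^T *m A *m z) 0 0 <= lmax * \sum_i z i 0 ^+ 2.
Proof.
have [c [a [c0 ea -> -> _]]] := symmetric_spectral_weights z sA.
rewrite mulr_sumr; apply: ler_sum => i _; rewrite [lmax * _]mulrC ler_wpM2l //.
by case/andP: (eigA (ea i)).
Qed.

Lemma sum_sq_shift_le (z : 'cV[R]_n) :
  \sum_i ((A *m z) i 0 - lmin * z i 0) ^+ 2 <= (lmax - lmin) ^+ 2 * \sum_i z i 0 ^+ 2.
Proof.
have [c [a [c0 ea nz qz nAz]]] := symmetric_spectral_weights z sA.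
have -> : \sum_i ((A *m z) i 0 - lmin * z i 0) ^+ 2 = \sum_i c i * (a i - lmin) ^+ 2.
  rewrite (eq_bigr (fun i => ((- lmin) * z i 0 + 1 * (A *m z) i 0) ^+ 2)).
    rewrite sum_sqrD_scale -bformE /bform qz nz nAz !mulr_sumr -!big_split /=.
    by apply: eq_bigr => i _; ring.
  by move=> i _; ring.
rewrite nz mulr_sumr; apply: ler_sum => i _; rewrite mulrC ler_wpM2r //.
have /andP[lo hi] := eigA (ea i).
rewrite -subr_ge0; have : 0 <= a i - lmin by rewrite subr_ge0.
nra.
Qed.

End Rayleigh.

Section NearZero.
Variable R : realFieldType.

Lemma norm_sum_pow_le m (q : 'I_m -> R) (t : R) : `|t| <= 1 ->
  `|\sum_i q i * t ^+ i| <= \sum_i `|q i|.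
Proof.
move=> t1; apply: (le_trans (ler_norm_sum _ _ _)); apply: ler_sum => i _.
by rewrite normrM normrX ler_piMr ?exprn_ile1.
Qed.

(* Dividing by [t ^+ k] gives [0 <= a + K t] for all small [t > 0]. *)
Lemma coef_ge0_near0 (a K d : R) (k : nat) (r : R -> R) : 0 < d ->
  (forall t, 0 < t <= 1 -> `|r t| <= K * t ^+ k.+1) ->
  (forall t, 0 < t < d -> 0 <= a * t ^+ k + r t) -> 0 <= a.
Proof.
move=> d0 rK hpos; apply/ler_addgt0Pr => e e0.
pose t := Num.min (d / 2) (Num.min 1 (e / (`|K| + 1))).
have K1 : 0 < `|K| + 1 by rewrite ltr_wpDl.
have t0 : 0 < t by rewrite !lt_min !divr_gt0 ?ltr01.
have [td2 t1 te] : [/\ t <= d / 2, t <= 1 & t <= e / (`|K| + 1)].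
  by rewrite !ge_min !lexx ?orbT.
have td : t < d by lra.
have tK : `|K| * t <= e.
  move: te; rewrite ler_pdivlMr // => h; apply: le_trans h.
  by rewrite mulrC ler_wpM2l ?ltW // ltrDl.
have : 0 <= t ^+ k * (a + K * t).
  apply: le_trans (hpos t _) _; first by rewrite t0 td.
  have /ler_normlP[_ hr] : `|r t| <= K * t ^+ k.+1 by rewrite rK // t0 t1.
  have -> : t ^+ k * (a + K * t) = a * t ^+ k + K * t ^+ k.+1 by rewrite exprSr; ring.
  by rewrite lerD2l.
rewrite pmulr_rge0 ?exprn_gt0 // => h; apply: le_trans h _.
by rewrite lerD2l; apply: le_trans tK; rewrite ler_pM2r ?ler_norm.
Qed.

Lemma near0_ge0_coefs m (f : R -> R) (a1 a2 d : R) (q : 'I_m -> R) :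
  (forall t, f t = a1 * t + a2 * t ^+ 2 + t ^+ 3 * \sum_i q i * t ^+ i) ->
  0 < d -> (forall t, 0 < `|t| < d -> 0 <= f t) -> a1 = 0 /\ 0 <= a2.
Proof.
move=> fE d0 f_ge0.
have hpos t : 0 < `|t| < d -> 0 <= a1 * t + a2 * t ^+ 2 + t ^+ 3 * \sum_i q i * t ^+ i.
  by rewrite -fE; exact: f_ge0.
pose tail t := t ^+ 3 * \sum_i q i * t ^+ i.
pose Q := \sum_i `|q i|.
have Q0 : 0 <= Q by rewrite sumr_ge0.
have tailQ t : `|t| <= 1 -> `|tail t| <= Q * `|t| ^+ 3.
  by move=> t1; rewrite normrM normrX mulrC ler_wpM2r ?exprn_ge0 ?norm_sum_pow_le.
have quad_tailQ s t : 0 < t <= 1 -> `|s| = t ->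
    `|a2 * t ^+ 2 + tail s| <= (`|a2| + Q) * t ^+ 2.
  move=> /andP[t0 t1] st; apply: (le_trans (ler_normD _ _)).
  rewrite normrM normrX (gtr0_norm t0) mulrDl lerD2l.
  apply: (le_trans (tailQ s _)); rewrite st //; apply: ler_wpM2l => //.
  by rewrite exprSr ler_piMr // exprn_ge0 // ltW.
have a1_ge0 : 0 <= a1.
  apply: (@coef_ge0_near0 _ (`|a2| + Q) _ 1 (fun t => a2 * t ^+ 2 + tail t) d0).
    by move=> t ht; apply: quad_tailQ => //; rewrite gtr0_norm //; case/andP: ht.
  move=> t /andP[t0 td]; rewrite expr1 addrA; apply: hpos.
  by rewrite gtr0_norm // t0 td.
have a1_le0 : 0 <= - a1.
  apply: (@coef_ge0_near0 _ (`|a2| + Q) _ 1 (fun t => a2 * t ^+ 2 + tail (- t)) d0).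
    by move=> t ht; apply: quad_tailQ => //; rewrite normrN gtr0_norm //; case/andP: ht.
  move=> t /andP[t0 td]; have := hpos (- t); rewrite normrN gtr0_norm // t0 td sqrrN.
  by rewrite expr1 mulrN mulNr addrA; apply.
have a1E : a1 = 0 by lra.
split=> //; apply: (@coef_ge0_near0 _ Q _ 2 tail d0).
  by move=> t /andP[t0 t1]; have := tailQ t; rewrite gtr0_norm //; apply.
move=> t /andP[t0 td]; have := hpos t; rewrite gtr0_norm // t0 td a1E mul0r add0r.
by apply.
Qed.
End NearZero.

Section SphereCurve.
Variables (R : realType) (n : nat) (A : 'M[R]_n) (beta : R) (y v : 'cV[R]_n).
Hypotheses (sA : A^T = A) (y_sphere : sphere y) (yv : \sum_i y i 0 * v i 0 = 0).

Local Notation c := (\sum_i v i 0 ^+ 2).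

(* The great circle through [y] in the direction [v], parametrised by
   [t = tan (theta / 2) / |v|]: rational in [t], so that clearing the
   denominator turns [fobj] along it into a polynomial in [t]. *)
Definition sphere_curve (t : R) : 'cV[R]_n :=
  (1 + c * t ^+ 2)^-1 *: ((1 - c * t ^+ 2) *: y + (2 * t) *: v).

Lemma sphere_curve_den_gt0 t : 0 < 1 + c * t ^+ 2.
Proof.
have c0 : 0 <= c by apply: sumr_ge0 => i _; exact: sqr_ge0.
by rewrite ltr_pwDl // mulr_ge0 ?sqr_ge0.
Qed.

Lemma sphere_curveE t i : sphere_curve t i 0 =
  (1 + c * t ^+ 2)^-1 * (1 - c * t ^+ 2) * y i 0 + (1 + c * t ^+ 2)^-1 * (2 * t) * v i 0.
Proof. by rewrite !mxE; ring. Qed.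

Lemma sphere_curve_sphere t : sphere (sphere_curve t).
Proof.
have den0 := lt0r_neq0 (sphere_curve_den_gt0 t).
rewrite /sphere /= (eq_bigr _ (fun i _ => congr1 (fun r => r ^+ 2) (sphere_curveE t i))).
by rewrite sum_sqrD_scale y_sphere yv; field.
Qed.

Lemma sphere_curve_dist t :
  \sum_i (sphere_curve t i 0 - y i 0) ^+ 2 = 4 * c * t ^+ 2 / (1 + c * t ^+ 2).
Proof.
have den0 := lt0r_neq0 (sphere_curve_den_gt0 t).
rewrite (eq_bigr (fun i => (((1 + c * t ^+ 2)^-1 * (1 - c * t ^+ 2) - 1) * y i 0
  + (1 + c * t ^+ 2)^-1 * (2 * t) * v i 0) ^+ 2)).
  by rewrite sum_sqrD_scale y_sphere yv; field.
by move=> i _; rewrite sphere_curveE; ring.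
Qed.

Lemma fobj_sphere_curve_expansion : exists q : 'I_5 -> R, forall t,
  (1 + c * t ^+ 2) ^+ 4 * (fobj A beta (sphere_curve t) - fobj A beta y) =
  2 * (bform A y v + 2 * beta * \sum_i y i 0 ^+ 3 * v i 0) * t
  + 2 * (qform A v + 6 * beta * \sum_i y i 0 ^+ 2 * v i 0 ^+ 2
         - c * (qform A y + 2 * beta * \sum_i y i 0 ^+ 4)) * t ^+ 2
  + t ^+ 3 * \sum_i q i * t ^+ i.
Proof.
set P := bform A y v; set Qy := qform A y; set Qv := qform A v.
set S := \sum_i y i 0 ^+ 4; set S31 := \sum_i y i 0 ^+ 3 * v i 0.
set S22 := \sum_i y i 0 ^+ 2 * v i 0 ^+ 2; set S13 := \sum_i y i 0 * v i 0 ^+ 3.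
set S04 := \sum_i v i 0 ^+ 4; set b := beta.
exists (fun i : 'I_5 => [::
  16 * S13 * b - 12 * c * S31 * b + 2 * c * P;
  8 * S04 * b - 24 * c * S22 * b + 4 * c * Qv - 4 * c ^+ 2 * Qy;
  - 16 * c * S13 * b + 12 * c ^+ 2 * S31 * b - 2 * c ^+ 2 * P;
  12 * c ^+ 2 * S22 * b + 2 * c ^+ 2 * Qv - 4 * c ^+ 3 * S * b - 2 * c ^+ 3 * Qy;
  - 4 * c ^+ 3 * S31 * b - 2 * c ^+ 3 * P]`_i) => t.
have den0 := lt0r_neq0 (sphere_curve_den_gt0 t).
rewrite !big_ord_recr big_ord0 /= /fobj -/Qy -/S.
rewrite (eq_bigr _ (fun i _ => congr1 (fun r => r ^+ 4) (sphere_curveE t i))).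
rewrite sum_pow4D_scale -/S -/S31 -/S22 -/S13 -/S04.
have -> : sphere_curve t = ((1 + c * t ^+ 2)^-1 * (1 - c * t ^+ 2)) *: y
    + ((1 + c * t ^+ 2)^-1 * (2 * t)) *: v by rewrite /sphere_curve scalerDr !scalerA.
rewrite qform_lin // -/P -/Qy -/Qv.
by field.
Qed.

End SphereCurve.

Lemma local_min_sphere_conditions (R : realType) n (A : 'M[R]_n) (beta : R)
    (y v : 'cV[R]_n) :
  A^T = A -> local_min_on (fobj A beta) (@sphere R n) y -> \sum_i y i 0 * v i 0 = 0 ->
  bform A y v + 2 * beta * \sum_i y i 0 ^+ 3 * v i 0 = 0 /\
  (\sum_i v i 0 ^+ 2) * (qform A y + 2 * beta * \sum_i y i 0 ^+ 4)
    <= qform A v + 6 * beta * \sum_i y i 0 ^+ 2 * v i 0 ^+ 2.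
Proof.
move=> sA [y_sphere [eps [eps0 ymin]]] yv.
have [q expand] := fobj_sphere_curve_expansion beta y v sA.
set c := \sum_i v i 0 ^+ 2 in expand *.
have c0 : 0 <= c by apply: sumr_ge0 => i _; exact: sqr_ge0.
pose d := eps / (2 * c + 1).
have c1 : 0 < 2 * c + 1 by rewrite ltr_wpDl ?mulr_ge0.
have d0 : 0 < d by rewrite divr_gt0.
have eps_d : (2 * c + 1) * d = eps by rewrite mulrC divfK ?gt_eqF.
have near_y t : 0 < `|t| < d -> \sum_i (sphere_curve y v t i 0 - y i 0) ^+ 2 < eps ^+ 2.
  move=> /andP[t0 td]; have den := sphere_curve_den_gt0 v t.
  have t2 : t ^+ 2 < d ^+ 2 by rewrite -real_normK ?num_real //; nra.
  rewrite sphere_curve_dist // ltr_pdivrMr // -/c -eps_d.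
  have h1 : 4 * c * t ^+ 2 <= 4 * c * d ^+ 2 by rewrite ler_wpM2l ?mulr_ge0 // ltW.
  have h2 : 0 <= (2 * c + 1) ^+ 2 * d ^+ 2 * (c * t ^+ 2).
    exact: mulr_ge0 (mulr_ge0 (sqr_ge0 _) (sqr_ge0 _)) (mulr_ge0 c0 (sqr_ge0 _)).
  nra.
have hpos t : 0 < `|t| < d ->
    0 <= (1 + c * t ^+ 2) ^+ 4 * (fobj A beta (sphere_curve y v t) - fobj A beta y).
  move=> ht; apply: mulr_ge0; first by rewrite exprn_ge0 ?ltW ?sphere_curve_den_gt0.
  by rewrite subr_ge0; apply: ymin; [exact: sphere_curve_sphere | exact: near_y].
have [] := near0_ge0_coefs expand d0 hpos.
by split; lra.
Qed.

Section UnitSum.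
Variables (R : realFieldType) (n : nat) (x : 'I_n -> R).
Hypotheses (n_gt0 : (0 < n)%N) (x_unit : \sum_i x i ^+ 2 = 1).

Lemma exists_sq_ge_inv_card : exists m, n%:R^-1 <= x m ^+ 2.
Proof.
have [/existsP //|/existsPn hlt] := boolP [exists m, n%:R^-1 <= x m ^+ 2].
suff : \sum_i x i ^+ 2 < \sum_(i < n) n%:R^-1.
  by rewrite x_unit sumr_const card_ord -[_ *+ n]mulr_natl mulfV ?ltxx ?pnatr_eq0 -?lt0n.
apply: ltr_sum => [|i _]; first by apply/hasP; exists (Ordinal n_gt0); rewrite ?mem_index_enum.
by rewrite ltNge hlt.
Qed.

Lemma sum_pow4_ge_inv_card : n%:R^-1 <= \sum_i x i ^+ 4.
Proof.
have n0 : n%:R != 0 :> R by rewrite pnatr_eq0 -lt0n.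
rewrite -subr_ge0; have -> : \sum_i x i ^+ 4 - n%:R^-1 = \sum_i (x i ^+ 2 - n%:R^-1) ^+ 2.
  rewrite [RHS](eq_bigr (fun i => x i ^+ 4 + (- 2 * n%:R^-1) * x i ^+ 2 + n%:R^-1 ^+ 2)).
    by rewrite !big_split /= -mulr_sumr x_unit sumr_const card_ord -mulr_natl; field.
  by move=> i _; ring.
by apply: sumr_ge0 => i _; exact: sqr_ge0.
Qed.

End UnitSum.

Lemma weight_ge_of_second_order (R : realFieldType) (N beta rho S a b : R) :
  0 < N -> 0 < beta -> 7 * N * rho <= 2 * beta -> N^-1 <= S -> 1 <= N * b -> 0 <= a ->
  (b + a) * (2 * beta * S - rho) <= 12 * beta * a * b -> 1 <= 7 * N * a.
Proof.
move=> N0 b0 hrho hS hb a0 hsec; rewrite -(ler_pM2l N0) mulfV ?gt_eqF // in hS.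
have gap : 0 <= 2 * beta * S - rho.
  by rewrite -(pmulr_rge0 _ N0); nra.
have b_gap : b * (2 * beta * S - rho) <= b * (12 * beta * a) by nra.
rewrite ler_pM2l in b_gap; last by nra.
have : 12 * beta <= 12 * beta * (7 * N * a) by nra.
by rewrite -[X in X <= _]mulr1 ler_pM2l // mulr_gt0.
Qed.

Lemma sum_mul_delta (R : pzSemiRingType) n (F : 'I_n -> R) k :
  \sum_i F i * (i == k)%:R = F k.
Proof. by under eq_bigr do rewrite mulr_natr mulrb; rewrite -big_mkcond big_pred1_eq. Qed.

Section QuarticCriticalPoint.
Variables (R : realType) (n : nat) (A : 'M[R]_n) (lam1 lamn beta : R) (y : 'cV[R]_n).
Hypotheses (sA : A^T = A) (eigA : forall a, eigenvalue A a -> lamn <= a <= lam1).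
Hypothesis ymin : local_min_on (fobj A beta) (@sphere R n) y.

Local Notation N := (n%:R : R).
Local Notation S := (\sum_i y i 0 ^+ 4).

Let y_sphere : \sum_i y i 0 ^+ 2 = 1. Proof. by case: ymin. Qed.

Definition plane_dir k m : 'cV[R]_n :=
  \col_i (y m 0 * (i == k)%:R - y k 0 * (i == m)%:R).

Lemma sum_mul_plane_dir (F : 'I_n -> R) k m :
  \sum_i F i * plane_dir k m i 0 = y m 0 * F k - y k 0 * F m.
Proof.
rewrite (eq_bigr (fun i => y m 0 * (F i * (i == k)%:R) - y k 0 * (F i * (i == m)%:R))).
  by rewrite sumrB -!mulr_sumr !sum_mul_delta.
by move=> i _; rewrite mxE; ring.
Qed.

Lemma sum_mul_plane_dir_sq (F : 'I_n -> R) k m : k != m ->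
  \sum_i F i * plane_dir k m i 0 ^+ 2 = F k * y m 0 ^+ 2 + F m * y k 0 ^+ 2.
Proof.
move=> km.
rewrite (eq_bigr (fun i =>
  y m 0 ^+ 2 * (F i * (i == k)%:R) + y k 0 ^+ 2 * (F i * (i == m)%:R))).
  by rewrite big_split /= -!mulr_sumr !sum_mul_delta; ring.
move=> i _; rewrite mxE.
have [->|ik] := eqVneq i k; first by rewrite (negbTE km) /= ?mulr1n ?mulr0n; ring.
have [->|im] := eqVneq i m; first by rewrite /= ?mulr1n ?mulr0n; ring.
by rewrite /= ?mulr0n; ring.
Qed.

Lemma plane_dir_tangent k m : \sum_i y i 0 * plane_dir k m i 0 = 0.
Proof. by rewrite sum_mul_plane_dir mulrC subrr. Qed.

Lemma lagrange_eq k :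
  (A *m y) k 0 + 2 * beta * y k 0 ^+ 3 = (qform A y + 2 * beta * S) * y k 0.
Proof.
pose g i := (A *m y) i 0 + 2 * beta * y i 0 ^+ 3.
have g_sym m : g k * y m 0 = g m * y k 0.
  have [stat _] := local_min_sphere_conditions sA ymin (plane_dir_tangent k m).
  move: stat; rewrite bformC // bformE; under eq_bigr do rewrite mulrC.
  by rewrite !sum_mul_plane_dir /g; lra.
have mu_E : \sum_m g m * y m 0 = qform A y + 2 * beta * S.
  rewrite -[qform A y]/(bform A y y) bformE mulr_sumr -big_split /=.
  by apply: eq_bigr => i _; rewrite /g; ring.
rewrite -/(g k) -mu_E mulr_suml -[g k]mulr1 -y_sphere mulr_sumr.
by apply: eq_bigr => m _; rewrite expr2 mulrA g_sym; ring.
Qed.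

Hypotheses (n_gt0 : (0 < n)%N) (beta_gt0 : 0 < beta).
Hypothesis beta_ge : 7 * N * (lam1 - lamn) <= 2 * beta.

Let N_gt0 : 0 < N. Proof. by rewrite ltr0n. Qed.
Let S_ge : N^-1 <= S. Proof. exact: sum_pow4_ge_inv_card n_gt0 y_sphere. Qed.
Let qform_y_ge : lamn <= qform A y.
Proof. by have := rayleigh_ge sA eigA y; rewrite y_sphere mulr1. Qed.

(* Second-order condition along [plane_dir k m], with [m] a coordinate of
   weight at least [1/n]. *)
Lemma coord_sq_ge k : 1 <= 7 * N * y k 0 ^+ 2.
Proof.
have [m ym] : exists m, N^-1 <= y m 0 ^+ 2 := exists_sq_ge_inv_card n_gt0 y_sphere.
have {}ym : 1 <= N * y m 0 ^+ 2.
  by rewrite -(ler_pM2l N_gt0) mulfV ?gt_eqF in ym.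
have [->|km] := eqVneq k m; first by have := sqr_ge0 (y m 0); nra.
have [_ second] := local_min_sphere_conditions sA ymin (plane_dir_tangent k m).
have c_eq : \sum_i plane_dir k m i 0 ^+ 2 = y m 0 ^+ 2 + y k 0 ^+ 2.
  transitivity (\sum_i 1 * plane_dir k m i 0 ^+ 2).
    by apply: eq_bigr => i _; rewrite mul1r.
  by rewrite sum_mul_plane_dir_sq // !mul1r.
have Qv : qform A (plane_dir k m) <= lam1 * \sum_i plane_dir k m i 0 ^+ 2 :=
  rayleigh_le sA eigA _.
rewrite sum_mul_plane_dir_sq // c_eq in second; rewrite c_eq in Qv.
move: second Qv ym; set a := y k 0 ^+ 2; set b := y m 0 ^+ 2 => second Qv ym.
have a0 : 0 <= a := sqr_ge0 _.
have ab0 : 0 <= b + a by rewrite addr_ge0 ?sqr_ge0.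
have hQy := ler_wpM2l ab0 qform_y_ge.
by apply: (weight_ge_of_second_order N_gt0 beta_gt0 beta_ge S_ge ym a0); lra.
Qed.

Lemma sum_pow4_excess : 4 * beta ^+ 2 * (S - N^-1) <= 7 * N * (lam1 - lamn) ^+ 2.
Proof.
set D := qform A y + 2 * beta * S - lamn.
have shift k : (A *m y) k 0 - lamn * y k 0 = (D - 2 * beta * y k 0 ^+ 2) * y k 0.
  have -> : (A *m y) k 0 = (qform A y + 2 * beta * S) * y k 0 - 2 * beta * y k 0 ^+ 3.
    by rewrite -lagrange_eq; ring.
  by rewrite /D; ring.
have sum_le : \sum_i (D - 2 * beta * y i 0 ^+ 2) ^+ 2 <= 7 * N * (lam1 - lamn) ^+ 2.
  have := sum_sq_shift_le sA eigA y; rewrite y_sphere mulr1 => shift_le.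
  apply: le_trans (ler_wpM2l _ shift_le); last by rewrite mulr_ge0 ?ler0n.
  rewrite mulr_sumr; apply: ler_sum => i _; rewrite shift exprMn.
  by have := coord_sq_ge i; have := sqr_ge0 (D - 2 * beta * y i 0 ^+ 2); nra.
have sum_E : \sum_i (D - 2 * beta * y i 0 ^+ 2) ^+ 2 =
    N * D ^+ 2 - 4 * beta * D + 4 * beta ^+ 2 * S.
  rewrite (eq_bigr (fun i =>
    D ^+ 2 + (- 4 * beta * D) * y i 0 ^+ 2 + 4 * beta ^+ 2 * y i 0 ^+ 4)).
    by rewrite !big_split /= -!mulr_sumr y_sphere sumr_const card_ord; ring.
  by move=> i _; ring.
have min_D : 0 <= N * D ^+ 2 - 4 * beta * D + 4 * beta ^+ 2 / N.
  have -> : N * D ^+ 2 - 4 * beta * D + 4 * beta ^+ 2 / N = N * (D - 2 * beta / N) ^+ 2.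
    by field; rewrite gt_eqF.
  by rewrite mulr_ge0 ?sqr_ge0 ?ler0n.
by rewrite sum_E in sum_le; lra.
Qed.

End QuarticCriticalPoint.

Lemma large_beta_bounds (R : realFieldType) (N b r : R) :
  2 <= N -> 0 <= r -> 18 * N ^+ 3 / (N - 1) * r < b ->
  [/\ 0 < b, 18 * N ^+ 2 * r < b & 7 * N * r <= 2 * b].
Proof.
move=> N2 r0; rewrite mulrAC ltr_pdivrMr ?subr_gt0 ?(lt_le_trans _ N2) ?ltr1n // => hb.
have N0 : 0 < N by lra.
have b0 : 0 < b.
  have : 0 < b * (N - 1).
    by apply: le_lt_trans hb; rewrite !mulr_ge0 ?exprn_ge0 ?(ltW N0).
  by rewrite pmulr_lgt0 // subr_gt0 (lt_le_trans _ N2) ?ltr1n.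
have p_lt : 18 * N ^+ 2 * r < b.
  rewrite -(ltr_pM2l N0) (_ : N * (18 * N ^+ 2 * r) = 18 * N ^+ 3 * r); last by ring.
  by apply: lt_le_trans hb _; lra.
split=> //; have := mulr_ge0 (ltW N0) r0.
nra.
Qed.

Lemma large_beta_gap (R : realFieldType) (N b r T : R) :
  2 <= N -> 0 <= r -> 18 * N ^+ 3 / (N - 1) * r < b -> 4 * b ^+ 2 * T <= 7 * N * r ^+ 2 ->
  r / 2 + b * T / 2 <= 1 / (18 * N) * (b / (2 * N)).
Proof.
move=> N2 r0 hb hT; have [b0 p_lt _] := large_beta_bounds N2 r0 hb.
move: hb; rewrite mulrAC ltr_pdivrMr ?subr_gt0 ?(lt_le_trans _ N2) ?ltr1n // => hb.
have N0 : 0 < N by lra.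
pose p := 18 * N ^+ 2 * r.
have p0 : 0 <= p by rewrite /p !mulr_ge0 ?exprn_ge0 ?(ltW N0).
have Np : N * p < b * (N - 1).
  by rewrite /p (_ : N * (18 * N ^+ 2 * r) = 18 * N ^+ 3 * r) //; ring.
have pb : 2 * N * p * b <= 2 * b ^+ 2 * (N - 1) by nra.
have hT2 : 36 * N ^+ 3 * b ^+ 2 * T <= 2 * b ^+ 2.
  have N3 : 0 <= 9 * N ^+ 3 by rewrite mulr_ge0 ?exprn_ge0 ?(ltW N0).
  have h1 := ler_wpM2l N3 hT.
  have h2 : 36 * (9 * N ^+ 3 * (7 * N * r ^+ 2)) = 7 * p ^+ 2 by rewrite /p; ring.
  have h3 : p ^+ 2 <= b ^+ 2 by nra.
  have := sqr_ge0 b; lra.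
have hd : 0 < 72 * N ^+ 3 * b by rewrite !mulr_gt0 ?exprn_gt0.
rewrite -(ler_pM2l hd).
have -> : 72 * N ^+ 3 * b * (r / 2 + b * T / 2) = 2 * N * p * b + 36 * N ^+ 3 * b ^+ 2 * T.
  by rewrite /p; field.
have -> : 72 * N ^+ 3 * b * (1 / (18 * N) * (b / (2 * N))) = 2 * N * b ^+ 2.
  by field; rewrite gt_eqF.
lra.
Qed.

Lemma sphere_neq0 (R : realType) n (z : 'cV[R]_n) : sphere z -> z != 0.
Proof.
move=> zS; apply/eqP => z0; move: zS; rewrite /sphere /= z0 big1 => [/eqP|i _].
  by rewrite eq_sym oner_eq0.
by rewrite mxE expr0n.
Qed.

Lemma fobj_ge_sphere (R : realType) n (A : 'M[R]_n) (beta : R) (z : 'cV[R]_n) :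
  (0 < n)%N -> 0 <= beta -> sphere z -> qform A z / 2 + beta / (2 * n%:R) <= fobj A beta z.
Proof.
move=> n_gt0 beta0 zS; rewrite /fobj lerD2l invfM mulrA ler_wpM2l ?divr_ge0 //.
exact: sum_pow4_ge_inv_card n_gt0 zS.
Qed.

Lemma le_inf_fobj_sphere (R : realType) n (A : 'M[R]_n) (beta l : R) :
  (0 < n)%N -> 0 <= beta -> @sphere R n !=set0 ->
  (forall z, sphere z -> l <= qform A z) ->
  l / 2 + beta / (2 * n%:R) <= inf [set fobj A beta z | z in @sphere R n].
Proof.
move=> n_gt0 beta0 [y yS] lq; apply: lb_le_inf => [|_ [z zS <-]].
  by exists (fobj A beta y), y.
apply: le_trans (fobj_ge_sphere A n_gt0 beta0 zS).
by rewrite lerD2r ler_pM2r ?invr_gt0 ?lq.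
Qed.

Unset Implicit Arguments.
Theorem theorem13 (R : realType) (n : nat) (A : 'M[R]_n) (lam1 lamn beta : R)
  (y : 'cV[R]_n) :
  (2 <= n)%N ->
  symmetric_mx A -> posdef_mx A ->
  eigenvalue A lam1 -> eigenvalue A lamn ->
  (forall a, eigenvalue A a -> lamn <= a <= lam1) ->
  beta > (18 * n%:R ^+ 3) / (n%:R - 1) * (lam1 - lamn) ->
  local_min_on (fobj A beta) (@sphere R n) y ->
  fobj A beta y - inf [set fobj A beta z | z in @sphere R n]
    <= 1 / (18 * n%:R) * inf [set fobj A beta z | z in @sphere R n].
Proof.
move=> n2 sA posA eig1 _ eigA hbeta ymin.
have n_gt0 : (0 < n)%N by apply: leq_trans n2.
have N2 : 2 <= n%:R :> R by rewrite (ler_nat R 2 n).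
have rho0 : 0 <= lam1 - lamn by rewrite subr_ge0; case/andP: (eigA _ eig1).
have [beta_gt0 _ beta_ge] := large_beta_bounds N2 rho0 hbeta.
have gap := large_beta_gap N2 rho0 hbeta (sum_pow4_excess sA eigA ymin n_gt0 beta_gt0 beta_ge).
have [y_sphere _] := ymin.
have sphere_ne : @sphere R n !=set0 by exists y.
set E := [set fobj A beta z | z in @sphere R n].
have inf_ge_lamn : lamn / 2 + beta / (2 * n%:R) <= inf E.
  apply: le_inf_fobj_sphere n_gt0 (ltW beta_gt0) sphere_ne _ => z zS.
  by have := rayleigh_ge sA eigA z; rewrite zS mulr1.
have inf_ge_beta : 0 / 2 + beta / (2 * n%:R) <= inf E.
  apply: le_inf_fobj_sphere n_gt0 (ltW beta_gt0) sphere_ne _ => z zS.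
  exact/ltW/posA/sphere_neq0.
have fobj_y : fobj A beta y <= lam1 / 2 + beta / 2 * \sum_i y i 0 ^+ 4.
  rewrite /fobj lerD2r ler_pM2r ?invr_gt0 //.
  by have := rayleigh_le sA eigA y; rewrite y_sphere mulr1.
have c0 : 0 <= 1 / (18 * n%:R) :> R by rewrite divr_ge0 ?mulr_ge0 ?ler0n.
have := ler_wpM2l c0 inf_ge_beta.
have : beta * (\sum_i y i 0 ^+ 4 - n%:R^-1) / 2 =
    beta / 2 * \sum_i y i 0 ^+ 4 - beta / (2 * n%:R) by rewrite invfM; ring.
lra.
Qed.
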